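(* If $(M,+,0)$ is a naturally ordered commutative compact Hausdorff topological monoid, then the partially ordered set $(M,\le)$ is bounded, i.e., it has a greatest element.
   Context: A topological monoid is a monoid with a topology making the operation continuous. For a commutative monoid $(M,+,0)$, define $x\le y$ iff there is $z\in M$ with $x+z=y$; this is a preorder, and $M$ is naturally ordered if it is antisymmetric (so $(M,\le)$ is a partial order with least element $0$). *)

From HB Require Import structures.
From mathcomp Require Import all_boot all_order all_algebra.
From mathcomp Require Import all_classical all_reals all_analysis.
Set Implicit Arguments. Unset Strict Implicit. Unset Printing Implicit Defensive.

Definition comm_top_monoid (T : topologicalType) (add : T -> T -> T) (zero : T) : Prop :=
  [/\ (forall x y z, add x (add y z) = add (add x y) z),
      (forall x y, add x y = add y x),
      (forall x, add zero x = x) &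
      continuous (fun p : T * T => add p.1 p.2)].

Definition mle (T : Type) (add : T -> T -> T) (x y : T) : Prop :=
  exists z, add x z = y.

Definition naturally_ordered (T : Type) (add : T -> T -> T) : Prop :=
  forall x y, mle add x y -> mle add y x -> x = y.

From mathcomp Require Import all_boot all_order all_algebra.
From mathcomp Require Import all_classical all_reals all_analysis.
Local Open Scope classical_set_scope.

(* Each principal upset x + M is the continuous image of the compact space M,
   hence closed since M is Hausdorff.  Finitely many upsets x_1 + M, ...,
   x_n + M share the point x_1 + ... + x_n, so by compactness all of them share
   a point, and that point lies above every x. *)

Lemma compact_closed_finI (T : topologicalType) (I : choiceType)
    (f : I -> set T) :
  compact [set: T] -> (forall i, closed (f i)) -> finI setT f ->
  exists p, forall i, f i p.
Proof.
move=> cT fcl finIf.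
have [|p [_ clp]] := cT _ (finI_filter finIf).
  by exists setT => //; exists finmap.fset0 => //; rewrite predeqE.
exists p => i; apply: fcl => B nB; apply: clp nB.
by exists (f i) => //; exact: finI_from1.
Qed.

Lemma continuous_curry_l (T : topologicalType) (op : T -> T -> T) (x : T) :
  continuous (fun p : T * T => op p.1 p.2) -> continuous (op x).
Proof.
move=> cop y.
apply: (continuous_comp (f := fun y => (x, y)) (g := fun p : T * T => op p.1 p.2)).
  by apply: (@cvg_pair _ _ _ _ (nbhs x) (nbhs y)); [exact: cvg_cst|exact: cvg_id].
exact: cop.
Qed.

Lemma mle_image (T : Type) (add : T -> T -> T) (x : T) :
  mle add x = add x @` setT.
Proof.
by apply/seteqP; split => y; [case=> z <-; exists z|case=> z _ <-; exists z].
Qed.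

Lemma closed_mle (T : topologicalType) (add : T -> T -> T) (x : T) :
  continuous (fun p : T * T => add p.1 p.2) ->
  compact [set: T] -> hausdorff_space T -> closed (mle add x).
Proof.
move=> cadd cT hT; apply: compact_closed => //; rewrite mle_image.
apply: continuous_compact => //; apply: continuous_subspaceT.
exact: continuous_curry_l.
Qed.

Section CommutativeMonoid.
Variables (T : choiceType) (add : T -> T -> T) (zero : T).
Hypotheses (addA : forall x y z, add x (add y z) = add (add x y) z)
  (addC : forall x y, add x y = add y x) (add0 : forall x, add zero x = x).

Lemma mle_foldr (s : seq T) (x : T) : x \in s -> mle add x (foldr add zero s).
Proof.
elim: s => //= a s IHs; rewrite inE => /orP [/eqP ->|/IHs [z <-]].
  by exists (foldr add zero s).
by exists (add a z) => /=; rewrite addA (addC x a) -addA.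
Qed.

Lemma finI_mle : finI setT (mle add).
Proof.
move=> D _; exists (foldr add zero (finmap.enum_fset D)) => x /= xD.
exact: mle_foldr.
Qed.

End CommutativeMonoid.

Theorem proposition3p4 (T : topologicalType) (add : T -> T -> T) (zero : T) :
  comm_top_monoid add zero ->
  naturally_ordered add ->
  compact [set: T] ->
  hausdorff_space T ->
  exists top : T, forall x : T, mle add x top.
Proof.
move=> [addA addC add0 cadd] _ cT hT.
apply: compact_closed_finI => // [x|]; first exact: closed_mle.
exact: finI_mle.
Qed.
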